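(* Let $(\Omega,\nu)$ be a measure space and $u,v\colon\Omega\to(0,1]$ measurable functions such that, for some $\alpha>0$, $$\int_\Omega|\log u|\,d\nu<\infty\qquad\text{and}\qquad\int_\Omega u\,v^{-\alpha}\,d\nu<\infty .$$ Then $\displaystyle\int_\Omega|\log v|\,d\nu<\infty$. *)

From HB Require Import structures.
From mathcomp Require Import all_boot all_order all_algebra.
From mathcomp Require Import all_classical all_reals all_analysis.

From HB Require Import structures.
From mathcomp Require Import all_boot all_order all_algebra.
From mathcomp Require Import all_classical all_reals all_analysis.
From mathcomp Require Import measurable_realfun.
Import Order.TTheory GRing.Theory Num.Theory.
Local Open Scope classical_set_scope.
Local Open Scope ring_scope.

(* Since [ln y < y] for [y > 0], applying it to [y = u v^(-alpha)] gives
   [alpha |ln v| = - alpha ln v < u v^(-alpha) - ln u <= u v^(-alpha) + |ln u|];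
   so [|ln v|] is dominated by a multiple of a sum of two integrable functions. *)

Lemma norm_ln_le_powRN (R : realType) (a b alpha : R) :
  0 < a -> 0 < b <= 1 -> 0 < alpha ->
  `|ln b| <= alpha^-1 * (a * b `^ (- alpha) + `|ln a|).
Proof.
move=> a0 /andP[b0 b1] alpha0.
have ab0 : 0 < a * b `^ (- alpha) by rewrite mulr_gt0 ?powR_gt0.
have := ln_sublinear ab0; rewrite lnM ?posrE ?powR_gt0 // ln_powR => ln_ab.
rewrite ler_pdivlMl // ler0_norm ?ln_le0 // mulrN.
apply: (@le_trans _ _ (a * b `^ (- alpha) - ln a)).
  by rewrite lerBrDl -mulNr ltW.
by rewrite lerD2l -normrN ler_norm.
Qed.

Section dominated_integral.
Context d (T : measurableType d) (R : realType) (nu : {measure set T -> \bar R}).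

Lemma ge0_integral_dominated_lt_pinfty (f g h : T -> R) (c : R) :
  measurable_fun setT f -> measurable_fun setT g -> measurable_fun setT h ->
  (forall x, 0 <= g x) -> (forall x, 0 <= h x) -> 0 <= c ->
  (forall x, 0 <= f x <= c * (g x + h x)) ->
  (\int[nu]_x (g x)%:E < +oo)%E -> (\int[nu]_x (h x)%:E < +oo)%E ->
  (\int[nu]_x (f x)%:E < +oo)%E.
Proof.
move=> mf mg mh g0 h0 c0 fgh gfin hfin.
have mgE : measurable_fun setT (EFin \o g) by exact/measurable_EFinP.
have mhE : measurable_fun setT (EFin \o h) by exact/measurable_EFinP.
have mghE : measurable_fun setT (fun x => (g x)%:E + (h x)%:E)%E.
  exact: emeasurable_funD.
have gE0 x : (0 <= (g x)%:E)%E by rewrite lee_fin.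
have hE0 x : (0 <= (h x)%:E)%E by rewrite lee_fin.
have ghE0 x : (0 <= (g x)%:E + (h x)%:E)%E by rewrite adde_ge0.
apply: (@le_lt_trans _ _ (\int[nu]_x (c%:E * ((g x)%:E + (h x)%:E)))%E).
  apply: ge0_le_integral => //.
  - by move=> x _; rewrite lee_fin; case/andP: (fgh x).
  - exact/measurable_EFinP.
  - exact: measurable_funeM.
  - by move=> x _; rewrite -EFinD -EFinM lee_fin; case/andP: (fgh x).
rewrite ge0_integralZl ?lee_fin // ge0_integralD //.
by apply: lte_mul_pinfty; [rewrite lee_fin | | exact: lte_add_pinfty].
Qed.

End dominated_integral.

Theorem lemma4p2 (d : measure_display) (T : measurableType d) (R : realType)
  (nu : {measure set T -> \bar R}) (u v : T -> R) (alpha : R)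
  (mu_ : measurable_fun setT u) (mv : measurable_fun setT v)
  (hu : forall x, 0 < u x <= 1) (hv : forall x, 0 < v x <= 1)
  (halpha : 0 < alpha)
  (hlogu : (\int[nu]_x (`|ln (u x)|)%:E < +oo)%E)
  (huv : (\int[nu]_x (u x * v x `^ (- alpha))%:E < +oo)%E) :
  (\int[nu]_x (`|ln (v x)|)%:E < +oo)%E.
Proof.
have u0 x : 0 < u x by have /andP[] := hu x.
apply: (@ge0_integral_dominated_lt_pinfty _ _ _ nu _
  (fun x => u x * v x `^ (- alpha)) (fun x => `|ln (u x)|) alpha^-1).
- by apply: measurableT_comp => //; exact: measurableT_comp.
- apply: measurable_funM => //.
  by apply: (measurableT_comp (f := fun y : R => y `^ (- alpha))) => //; exact: measurable_powR.
- by apply: measurableT_comp => //; exact: measurableT_comp.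
- by move=> x; rewrite mulr_ge0 ?powR_ge0 // ltW.
- by move=> x; exact: normr_ge0.
- by rewrite invr_ge0 ltW.
- by move=> x; rewrite normr_ge0 norm_ln_le_powRN.
- exact: huv.
- exact: hlogu.
Qed.
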